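(* Let $H:\mathbb{R}^N\times\mathbb{R}^N\to\mathbb{R}$ be a skew-symmetric, finite, convex-concave function satisfying $|H(x_1,y_1)-H(x_2,y_2)|\le\Lambda\|x_1-x_2\|+\Lambda\|y_1-y_2\|$ for some $\Lambda>0$. Let $A\subset\mathbb{R}^N$ be a closed ball and $B\subset\mathbb{R}^N$ a compact set with non-empty interior, and fix $u\in\mathbb{R}^N$. Then there is a dense subset $A'\subset A$ such that for each $x\in A'$ there is a dense subset $B_{x,u}$ of $B$ with $$\nabla_1H(x,y)(u)=-\nabla_1H(x,y)(-u)\quad\text{for all }y\in B_{x,u}.$$
   Context: $\nabla_1H(x,y)(u)=\lim_{\lambda\to0^+}\frac{H(x+\lambda u,y)-H(x,y)}{\lambda}$ denotes the one-sided directional derivative in the first variable, which exists since $H$ is convex in its first variable. Skew-symmetric means $H(x,y)=-H(y,x)$; convex-concave means convex in the first variable and concave in the second. *)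

From Stdlib Require Import Reals Lra List.
From Stdlib Require Fin.
Open Scope R_scope.

Definition vec (N : nat) : Type := Fin.t N -> R.

Fixpoint sumfin (n : nat) : (Fin.t n -> R) -> R :=
  match n with
  | O => fun _ => 0
  | S m => fun f => f Fin.F1 + sumfin m (fun i => f (Fin.FS i))
  end.

Definition vadd {N} (x y : vec N) : vec N := fun i => x i + y i.
Definition vsub {N} (x y : vec N) : vec N := fun i => x i - y i.
Definition vscale {N} (a : R) (x : vec N) : vec N := fun i => a * x i.
Definition vopp {N} (x : vec N) : vec N := fun i => - x i.

Definition vnorm {N} (x : vec N) : R := sqrt (sumfin N (fun i => (x i) ^ 2)).
Definition vdist {N} (x y : vec N) : R := vnorm (vsub x y).

Definition open_set {N} (U : vec N -> Prop) : Prop :=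
  forall x, U x -> exists e, 0 < e /\ forall y, vdist y x < e -> U y.

Definition compact_set {N} (K : vec N -> Prop) : Prop :=
  forall (I : Type) (U : I -> vec N -> Prop),
    (forall i, open_set (U i)) ->
    (forall x, K x -> exists i, U i x) ->
    exists l : list I, forall x, K x -> exists i, In i l /\ U i x.

Definition closed_ball {N} (c : vec N) (r : R) : vec N -> Prop :=
  fun x => vdist x c <= r.

Definition nonempty_interior {N} (K : vec N -> Prop) : Prop :=
  exists x e, 0 < e /\ forall y, vdist y x < e -> K y.

Definition dense_in {N} (S A : vec N -> Prop) : Prop :=
  (forall x, S x -> A x) /\
  (forall x, A x -> forall e, 0 < e -> exists y, S y /\ vdist x y < e).

Definition skew_symmetric {N} (H : vec N -> vec N -> R) : Prop :=
  forall x y, H x y = - H y x.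

Definition convex_concave {N} (H : vec N -> vec N -> R) : Prop :=
  (forall y x1 x2 t, 0 <= t <= 1 ->
     H (vadd (vscale t x1) (vscale (1 - t) x2)) y <= t * H x1 y + (1 - t) * H x2 y) /\
  (forall x y1 y2 t, 0 <= t <= 1 ->
     t * H x y1 + (1 - t) * H x y2 <= H x (vadd (vscale t y1) (vscale (1 - t) y2))).

(* one-sided directional derivative in the first variable:
   nabla_1 H(x,y)(u) = L *)
Definition dir_deriv1 {N} (H : vec N -> vec N -> R) (x y u : vec N) (L : R) : Prop :=
  forall eps, 0 < eps -> exists delta, 0 < delta /\
    forall lam, 0 < lam < delta ->
      Rabs ((H (vadd x (vscale lam u)) y - H x y) / lam - L) < eps.

(** The restriction [t |-> H (x + t u, y)] of [H] to a line is convex and Lipschitz.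
    A convex function with slopes bounded by [M] cannot have its difference quotients
    jump by [d] over every subinterval of a grid of mesh [w] once [M / d] is small against
    the number of grid cells, so every interval contains a subinterval on which the
    right and left quotients at scale [w] differ by less than [d]. Refining nested
    intervals for the first [m] members of a countable family with tolerance [1/(m+1)]
    produces a point at which all of them are differentiable. Applied to [H (., y_k)]
    for a dense sequence [y_k] of the compact set [B], along segments in direction [u]
    starting arbitrarily close to any point of the ball, this gives [A'] with
    [B_{x,u} = {y_k}]. *)

From Pilot Require Import Defs.
From Stdlib Require Import Reals Lra Lia Classical ClassicalEpsilon FunctionalExtensionality List Cantor.
Open Scope R_scope.

Definition slope (f : R -> R) (a b : R) : R := (f b - f a) / (b - a).

Definition convex_fun (f : R -> R) : Prop :=
  forall a b s, 0 <= s <= 1 -> f (s * a + (1 - s) * b) <= s * f a + (1 - s) * f b.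

Definition lipschitz_fun (f : R -> R) (M : R) : Prop :=
  forall a b, Rabs (f a - f b) <= M * Rabs (a - b).

Definition one_sided_deriv (f : R -> R) (t v L : R) : Prop :=
  forall eps, 0 < eps -> exists delta, 0 < delta /\
    forall lam, 0 < lam < delta -> Rabs ((f (t + lam * v) - f t) / lam - L) < eps.

Definition slope_gap (f : R -> R) (t h : R) : R := slope f t (t + h) - slope f (t - h) t.

(** * Slopes of convex functions of one variable *)

Lemma Rdiv_le_cross a b c d : 0 < b -> 0 < d -> a * d <= c * b -> a / b <= c / d.
Proof.
  intros Hb Hd Hle. apply Rmult_le_reg_r with (b * d); [nra|].
  replace (a / b * (b * d)) with (a * d) by (field; lra).
  replace (c / d * (b * d)) with (c * b) by (field; lra). exact Hle.
Qed.

Lemma convex_three_points f x y z : convex_fun f -> x < y < z ->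
  (z - x) * f y <= (z - y) * f x + (y - x) * f z.
Proof.
  intros Hc Hxyz.
  set (s := (z - y) / (z - x)).
  assert (Hs : 0 <= s <= 1).
  { unfold s; split; [apply Rle_mult_inv_pos; lra|].
    apply Rmult_le_reg_r with (z - x); [lra|].
    replace ((z - y) / (z - x) * (z - x)) with (z - y) by (field; lra). lra. }
  pose proof (Hc x z s Hs) as Hconv.
  replace (s * x + (1 - s) * z) with y in Hconv by (unfold s; field; lra).
  apply Rmult_le_compat_l with (r := z - x) in Hconv; [|lra].
  replace ((z - x) * (s * f x + (1 - s) * f z))
    with ((z - y) * f x + (y - x) * f z) in Hconv by (unfold s; field; lra).
  exact Hconv.
Qed.

Lemma convex_slope_mono f a1 b1 a2 b2 : convex_fun f -> a1 < b1 -> a2 < b2 ->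
  a1 <= a2 -> b1 <= b2 -> slope f a1 b1 <= slope f a2 b2.
Proof.
  intros Hc H1 H2 Ha Hb. unfold slope.
  apply Rle_trans with ((f b2 - f a1) / (b2 - a1)).
  - destruct (Rle_lt_or_eq_dec _ _ Hb) as [Hlt|<-]; [|lra].
    pose proof (convex_three_points f a1 b1 b2 Hc ltac:(lra)).
    apply Rdiv_le_cross; lra.
  - destruct (Rle_lt_or_eq_dec _ _ Ha) as [Hlt|<-]; [|lra].
    pose proof (convex_three_points f a1 a2 b2 Hc ltac:(lra)).
    apply Rdiv_le_cross; lra.
Qed.

Lemma lipschitz_slope_bound f M a b : lipschitz_fun f M -> a < b -> Rabs (slope f a b) <= M.
Proof.
  intros Hl Hab. unfold slope, Rdiv. rewrite Rabs_mult, Rabs_inv.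
  pose proof (Hl b a) as Hba. rewrite (Rabs_right (b - a)) in * by lra.
  apply Rmult_le_reg_r with (b - a); [lra|].
  replace (Rabs (f b - f a) * / (b - a) * (b - a)) with (Rabs (f b - f a)) by (field; lra).
  lra.
Qed.

Lemma convex_differentiable_of_small_gap f t : convex_fun f ->
  (forall eps, 0 < eps -> exists h, 0 < h /\ slope_gap f t h < eps) ->
  exists L, one_sided_deriv f t 1 L /\ one_sided_deriv f t (-1) (- L).
Proof.
  intros Hc Hgap.
  destruct (completeness (fun v => exists h, 0 < h /\ v = slope f (t - h) t)) as [L [Hub Hlub]].
  - exists (slope f t (t + 1)). intros v [h [Hh ->]]. apply convex_slope_mono; auto; lra.
  - exists (slope f (t - 1) t), 1. split; [lra | reflexivity].
  - assert (Hleft : forall h, 0 < h -> slope f (t - h) t <= L).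
    { intros h Hh. apply Hub. exists h; auto. }
    assert (Hright : forall h, 0 < h -> L <= slope f t (t + h)).
    { intros h Hh. apply Hlub. intros v [h' [Hh' ->]]. apply convex_slope_mono; auto; lra. }
    exists L. split; intros eps Heps; destruct (Hgap eps Heps) as [h [Hh Hsmall]];
      exists h; split; auto; intros lam Hlam; unfold slope_gap in Hsmall.
    + replace ((f (t + lam * 1) - f t) / lam) with (slope f t (t + lam))
        by (unfold slope; replace (t + lam * 1) with (t + lam) by ring; field; lra).
      assert (slope f t (t + lam) <= slope f t (t + h)) by (apply convex_slope_mono; auto; lra).
      pose proof (Hright lam (proj1 Hlam)). pose proof (Hleft h Hh).
      rewrite Rabs_right; lra.
    + replace ((f (t + lam * -1) - f t) / lam - - L) with (L - slope f (t - lam) t)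
        by (unfold slope; replace (t + lam * -1) with (t - lam) by ring; field; lra).
      assert (slope f (t - h) t <= slope f (t - lam) t) by (apply convex_slope_mono; auto; lra).
      pose proof (Hleft lam (proj1 Hlam)). pose proof (Hright h Hh).
      rewrite Rabs_right; lra.
Qed.

Lemma bounded_seq_slow_step (s : nat -> R) M d m :
  (forall j, (j <= 2 * m)%nat -> Rabs (s j) <= M) -> 2 * M < INR m * d ->
  exists i, (i + 2 <= 2 * m)%nat /\ s (i + 2)%nat - s i < d.
Proof.
  intros Hb Hm. apply NNPP; intro Hno.
  assert (Hgrow : forall k, (k <= m)%nat -> s 0%nat + INR k * d <= s (2 * k)%nat).
  { induction k as [|k IH]; intro Hk; [simpl; lra|].
    assert (d <= s (2 * k + 2)%nat - s (2 * k)%nat).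
    { apply Rnot_lt_le; intro Hlt; apply Hno; exists (2 * k)%nat; split; [lia | exact Hlt]. }
    replace (2 * S k)%nat with (2 * k + 2)%nat by lia. rewrite S_INR.
    specialize (IH ltac:(lia)). lra. }
  pose proof (Hgrow m (le_n m)).
  pose proof (Hb 0%nat ltac:(lia)) as H0. pose proof (Hb (2 * m)%nat (le_n _)) as H2m.
  pose proof (Rle_abs (- s 0%nat)). rewrite Rabs_Ropp in *.
  pose proof (Rle_abs (s (2 * m)%nat)). lra.
Qed.

Lemma convex_uniform_small_gap f M d a b : convex_fun f -> lipschitz_fun f M ->
  0 < d -> a < b ->
  exists a' b' h, a <= a' < b' /\ b' <= b /\ 0 < h /\
    forall t, a' <= t <= b' -> slope_gap f t h < d.
Proof.
  intros Hc Hl Hd Hab.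
  destruct (INR_archimed d (2 * M) Hd) as [m Hm].
  set (n := (2 * m + 1)%nat).
  assert (Hn : 0 < INR n) by (apply lt_0_INR; unfold n; lia).
  set (w := (b - a) / INR n).
  assert (Hw : 0 < w) by (unfold w; apply Rdiv_lt_0_compat; lra).
  set (p := fun j : nat => a + INR j * w).
  assert (HpS : forall j, p (S j) = p j + w) by (intro; unfold p; rewrite S_INR; ring).
  destruct (bounded_seq_slow_step (fun j => slope f (p j) (p (S j))) M d m)
    as [i [Hi Hslow]]; [|lra|].
  { intros j _. apply (lipschitz_slope_bound f M); auto. rewrite HpS; lra. }
  replace (i + 2)%nat with (S (S i)) in Hslow by lia.
  pose proof (HpS i). pose proof (HpS (S i)). pose proof (HpS (S (S i))).
  exists (p (S i)), (p (S (S i))), w. split; [|split; [|split]].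
  - split; [|lra]. unfold p. pose proof (pos_INR (S i)). nra.
  - unfold p. assert (INR (S (S i)) <= INR n) by (apply le_INR; unfold n; lia).
    assert (INR n * w = b - a) by (unfold w; field; lra). nra.
  - exact Hw.
  - intros t Ht. unfold slope_gap.
    assert (slope f t (t + w) <= slope f (p (S (S i))) (p (S (S (S i)))))
      by (apply convex_slope_mono; auto; lra).
    assert (slope f (p i) (p (S i)) <= slope f (t - w) t)
      by (apply convex_slope_mono; auto; lra).
    lra.
Qed.

(** * Nested intervals *)

Lemma nested_intervals (a b : nat -> R) :
  Un_growing a -> Un_decreasing b -> (forall m, a m <= b m) ->
  exists t, forall m, a m <= t <= b m.
Proof.
  intros Ha Hb Hab.
  assert (Hcross : forall m j, a j <= b m).
  { intros m j. destruct (Nat.le_ge_cases m j) as [Hmj|Hjm].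
    - pose proof (decreasing_prop b m j Hb Hmj). pose proof (Hab j). lra.
    - pose proof (tech9 a Ha j m Hjm). pose proof (Hab m). lra. }
  destruct (completeness (fun v => exists j, v = a j)) as [t [Hub Hlub]].
  - exists (b 0%nat). intros v [j ->]. apply Hcross.
  - exists (a 0%nat), 0%nat. reflexivity.
  - exists t. intro m. split.
    + apply Hub. exists m. reflexivity.
    + apply Hlub. intros v [j ->]. apply Hcross.
Qed.

Lemma nested_refinement (P : nat -> R -> R -> Prop) :
  (forall m a b, a < b -> exists a' b', a <= a' < b' /\ b' <= b /\ P m a' b') ->
  forall a b, a < b -> exists t, a <= t <= b /\
    forall m, exists a' b', a' <= t <= b' /\ P m a' b'.
Proof.
  intros Hrefine a0 b0 H0.
  destruct (choice (fun (mI : nat * (R * R)) (I' : R * R) =>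
      let '(m, (a, b)) := mI in
      a < b -> a <= fst I' < snd I' /\ snd I' <= b /\ P m (fst I') (snd I')))
    as [step Hstep].
  { intros [m [a b]]. destruct (classic (a < b)) as [Hab|Hab].
    - destruct (Hrefine m a b Hab) as [a' [b' Hab']]. exists (a', b'). auto.
    - exists (a, b). intro; contradiction. }
  set (I := fix I (m : nat) : R * R := match m with O => (a0, b0) | S m => step (m, I m) end).
  assert (HIS : forall m, I (S m) = step (m, I m)) by reflexivity.
  assert (Hlt : forall m, fst (I m) < snd (I m)).
  { induction m as [|m IH]; [exact H0|]. rewrite HIS.
    destruct (I m) as [a b] eqn:EI. apply (Hstep (m, (a, b)) IH). }
  assert (Hnest : forall m, fst (I m) <= fst (I (S m)) < snd (I (S m)) /\
      snd (I (S m)) <= snd (I m) /\ P m (fst (I (S m))) (snd (I (S m))))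
    by (intro m; rewrite HIS; pose proof (Hlt m); destruct (I m) as [a b];
        apply (Hstep (m, (a, b))); assumption).
  destruct (nested_intervals (fun m => fst (I m)) (fun m => snd (I m))) as [t Ht].
  - intro m. apply Hnest.
  - intro m. apply Hnest.
  - intro m. apply Rlt_le, Hlt.
  - exists t. split; [exact (Ht 0%nat)|].
    intro m. exists (fst (I (S m))), (snd (I (S m))). split; [apply Ht | apply Hnest].
Qed.

Section ConvexFamily.

Variables (F : nat -> R -> R) (M : R).
Hypothesis F_convex : forall k, convex_fun (F k).
Hypothesis F_lipschitz : forall k, lipschitz_fun (F k) M.

Definition small_gap_on (m : nat) (d a b : R) : Prop :=
  forall k, (k <= m)%nat -> exists h, 0 < h /\ forall t, a <= t <= b -> slope_gap (F k) t h < d.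

Lemma family_uniform_small_gap d m a b : 0 < d -> a < b ->
  exists a' b', a <= a' < b' /\ b' <= b /\ small_gap_on m d a' b'.
Proof.
  intros Hd. revert a b. induction m as [|m IH]; intros a b Hab.
  - destruct (convex_uniform_small_gap (F 0) M d a b (F_convex _) (F_lipschitz _) Hd Hab)
      as [a' [b' [h [Ha' [Hb' [Hh Hgap]]]]]].
    exists a', b'. do 2 (split; [lra|]).
    intros k Hk. replace k with 0%nat by lia. eauto.
  - destruct (IH a b Hab) as [a1 [b1 [Ha1 [Hb1 Hsmall]]]].
    destruct (convex_uniform_small_gap (F (S m)) M d a1 b1 (F_convex _) (F_lipschitz _) Hd
      ltac:(lra)) as [a' [b' [h [Ha' [Hb' [Hh Hgap]]]]]].
    exists a', b'. do 2 (split; [lra|]).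
    intros k Hk. destruct (Nat.eq_dec k (S m)) as [->|Hne]; [eauto|].
    destruct (Hsmall k ltac:(lia)) as [h1 [Hh1 Hgap1]].
    exists h1. split; [exact Hh1|]. intros t Ht. apply Hgap1. lra.
Qed.

Lemma family_common_differentiability_point a b : a < b ->
  exists t, a <= t <= b /\
    forall k, exists L, one_sided_deriv (F k) t 1 L /\ one_sided_deriv (F k) t (-1) (- L).
Proof.
  intros Hab.
  destruct (nested_refinement (fun m => small_gap_on m (/ (INR m + 1)))) with a b
    as [t [Ht Hgood]]; [|exact Hab|].
  { intros m a' b' Hab'. apply family_uniform_small_gap; [|exact Hab'].
    apply Rinv_0_lt_compat. pose proof (pos_INR m). lra. }
  exists t. split; [exact Ht|]. intro k.
  apply convex_differentiable_of_small_gap; [apply F_convex|].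
  intros eps Heps.
  destruct (archimed_cor1 eps Heps) as [n [Hn Hn0]].
  destruct (Hgood (n + k)%nat) as [a' [b' [Htab Hsmall]]].
  destruct (Hsmall k ltac:(lia)) as [h [Hh Hgap]].
  exists h. split; [exact Hh|].
  apply Rlt_le_trans with (/ (INR (n + k) + 1)); [apply Hgap, Htab|].
  apply Rle_trans with (/ INR n); [|lra].
  apply Rinv_le_contravar; [apply lt_0_INR; exact Hn0|].
  rewrite plus_INR. pose proof (pos_INR k). lra.
Qed.

End ConvexFamily.

(** * Euclidean geometry of [vec N] *)

Ltac vec_ext := apply functional_extensionality; intro; unfold vadd, vsub, vscale, vopp; ring.

Lemma sumfin_ext n (f g : Fin.t n -> R) : (forall i, f i = g i) -> sumfin n f = sumfin n g.
Proof.
  revert f g; induction n as [|n IH]; intros f g Hfg; simpl; auto.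
  rewrite Hfg. f_equal. apply IH. intros; apply Hfg.
Qed.

Lemma sumfin_add n (f g : Fin.t n -> R) :
  sumfin n (fun i => f i + g i) = sumfin n f + sumfin n g.
Proof. revert f g; induction n as [|n IH]; intros f g; simpl; [ring|]. rewrite IH. ring. Qed.

Lemma sumfin_scale n a (f : Fin.t n -> R) : sumfin n (fun i => a * f i) = a * sumfin n f.
Proof. revert f; induction n as [|n IH]; intros f; simpl; [ring|]. rewrite IH. ring. Qed.

Lemma sumfin_nonneg n (f : Fin.t n -> R) : (forall i, 0 <= f i) -> 0 <= sumfin n f.
Proof.
  revert f; induction n as [|n IH]; intros f Hf; simpl; [lra|].
  pose proof (Hf Fin.F1). pose proof (IH (fun i => f (Fin.FS i)) (fun i => Hf _)). lra.
Qed.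

Lemma sumfin_sq_nonneg n (x : vec n) : 0 <= sumfin n (fun i => x i ^ 2).
Proof. apply sumfin_nonneg. intros; apply pow2_ge_0. Qed.

Lemma quadratic_nonneg_discriminant A B C :
  (forall t, 0 <= A + 2 * t * B + t * t * C) -> 0 <= C -> B * B <= A * C.
Proof.
  intros Hq HC. pose proof (Hq 0).
  destruct (Rle_lt_or_eq_dec _ _ HC) as [Hpos|<-].
  - pose proof (Hq (- B / C)) as Hmin.
    replace (A + 2 * (- B / C) * B + - B / C * (- B / C) * C) with (A - B * B / C) in Hmin
      by (field; lra).
    apply Rmult_le_compat_r with (r := C) in Hmin; [|lra].
    replace ((A - B * B / C) * C) with (A * C - B * B) in Hmin by (field; lra). lra.
  - destruct (Req_dec B 0) as [->|HB]; [nra|].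
    pose proof (Hq (- (A + 1) / (2 * B))) as Hlin.
    replace (A + 2 * (- (A + 1) / (2 * B)) * B + - (A + 1) / (2 * B) * (- (A + 1) / (2 * B)) * 0)
      with (-1) in Hlin by (field; lra). lra.
Qed.

Lemma sumfin_cauchy_schwarz n (x y : vec n) :
  sumfin n (fun i => x i * y i)
    <= sqrt (sumfin n (fun i => x i ^ 2)) * sqrt (sumfin n (fun i => y i ^ 2)).
Proof.
  set (A := sumfin n (fun i => x i ^ 2)). set (C := sumfin n (fun i => y i ^ 2)).
  set (B := sumfin n (fun i => x i * y i)).
  assert (HA : 0 <= A) by apply sumfin_sq_nonneg. assert (HC : 0 <= C) by apply sumfin_sq_nonneg.
  assert (Hq : forall t, 0 <= A + 2 * t * B + t * t * C).
  { intro t. replace (A + 2 * t * B + t * t * C) with (sumfin n (fun i => (x i + t * y i) ^ 2)).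
    - apply sumfin_sq_nonneg.
    - rewrite (sumfin_ext n _ (fun i => (x i ^ 2 + (2 * t) * (x i * y i)) + (t * t) * y i ^ 2))
        by (intros; ring).
      rewrite !sumfin_add, !sumfin_scale. unfold A, B, C. ring. }
  pose proof (quadratic_nonneg_discriminant A B C Hq HC).
  rewrite <- sqrt_mult by auto.
  destruct (Rle_or_lt B 0); [pose proof (sqrt_pos (A * C)); lra|].
  rewrite <- (sqrt_square B) by lra. apply sqrt_le_1_alt. nra.
Qed.

Lemma vnorm_nonneg n (x : vec n) : 0 <= vnorm x.
Proof. apply sqrt_pos. Qed.

Lemma vnorm_triangle n (x y : vec n) : vnorm (vadd x y) <= vnorm x + vnorm y.
Proof.
  unfold vnorm, vadd.
  set (A := sumfin n (fun i => x i ^ 2)). set (C := sumfin n (fun i => y i ^ 2)).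
  pose proof (sumfin_cauchy_schwarz n x y) as Hcs.
  replace (sumfin n (fun i => (x i + y i) ^ 2)) with (A + 2 * sumfin n (fun i => x i * y i) + C).
  2:{ rewrite (sumfin_ext n (fun i => (x i + y i) ^ 2)
        (fun i => (x i ^ 2 + 2 * (x i * y i)) + y i ^ 2)) by (intros; ring).
      rewrite !sumfin_add, !sumfin_scale. unfold A, C. ring. }
  assert (HA : 0 <= A) by apply sumfin_sq_nonneg. assert (HC : 0 <= C) by apply sumfin_sq_nonneg.
  pose proof (sqrt_pos A). pose proof (sqrt_pos C).
  rewrite <- (sqrt_square (sqrt A + sqrt C)) by lra.
  apply sqrt_le_1_alt.
  replace ((sqrt A + sqrt C) * (sqrt A + sqrt C))
    with (sqrt A * sqrt A + 2 * (sqrt A * sqrt C) + sqrt C * sqrt C) by ring.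
  rewrite !sqrt_sqrt by auto. fold A C in Hcs. lra.
Qed.

Lemma vnorm_scale n a (x : vec n) : vnorm (vscale a x) = Rabs a * vnorm x.
Proof.
  unfold vnorm, vscale.
  rewrite (sumfin_ext n _ (fun i => a ^ 2 * x i ^ 2)) by (intros; ring).
  rewrite sumfin_scale, sqrt_mult_alt by apply pow2_ge_0.
  f_equal. rewrite <- sqrt_Rsqr_abs. unfold Rsqr. f_equal. ring.
Qed.

Lemma vdist_triangle n (x y z : vec n) : vdist x z <= vdist x y + vdist y z.
Proof.
  unfold vdist. replace (vsub x z) with (vadd (vsub x y) (vsub y z)) by vec_ext.
  apply vnorm_triangle.
Qed.

Lemma vdist_scale n a (x y z : vec n) :
  vsub x y = vscale a z -> vdist x y = Rabs a * vnorm z.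
Proof. intros Hxy. unfold vdist. rewrite Hxy. apply vnorm_scale. Qed.

Lemma vdist_self n (x : vec n) : vdist x x = 0.
Proof.
  rewrite (vdist_scale _ 0 x x x) by vec_ext. rewrite Rabs_R0. ring.
Qed.

Lemma open_ball n (c : vec n) (e : R) : Defs.open_set (fun z : vec n => vdist z c < e).
Proof.
  intros z Hz. exists (e - vdist z c). split; [lra|].
  intros w Hw. pose proof (vdist_triangle n w z c). lra.
Qed.

(** * Density *)

Lemma compact_dense_sequence N (B : vec N -> Prop) (y0 : vec N) :
  compact_set B -> B y0 -> exists ys : nat -> vec N, dense_in (fun y => exists k, y = ys k) B.
Proof.
  intros Hc Hy0.
  assert (Hnet : forall n : nat, exists l : list {z | B z}, forall z, B z ->
     exists i, In i l /\ vdist z (proj1_sig i) < / (INR n + 1)).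
  { intros n. apply (Hc {z | B z} (fun i z => vdist z (proj1_sig i) < / (INR n + 1))).
    - intros i. apply open_ball.
    - intros z Hz. exists (exist _ z Hz). simpl. rewrite vdist_self.
      apply Rinv_0_lt_compat. pose proof (pos_INR n). lra. }
  destruct (choice _ Hnet) as [net Hnet'].
  set (d := exist B y0 Hy0).
  (* the Cantor pairing enumerates all entries of all the finite nets *)
  exists (fun k => proj1_sig (nth (snd (of_nat k)) (net (fst (of_nat k))) d)). split.
  - intros y [k ->]. apply proj2_sig.
  - intros z Hz e He.
    destruct (archimed_cor1 e He) as [n [Hn Hn0]].
    destruct (Hnet' n z Hz) as [i [Hi Hd]].
    destruct (In_nth _ _ d Hi) as [j [_ Hj]].
    exists (proj1_sig i). split.
    + exists (to_nat (n, j)). rewrite cancel_of_to. cbn [fst snd]. subst i. reflexivity.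
    + apply Rlt_le_trans with (/ (INR n + 1)); [exact Hd|].
      apply Rle_trans with (/ INR n); [|lra].
      apply Rinv_le_contravar; [apply lt_0_INR; exact Hn0 | lra].
Qed.

Lemma closed_ball_segment_near N (c x0 u : vec N) r e : 0 < r -> 0 < e ->
  closed_ball c r x0 ->
  exists x1 tau, 0 < tau /\ forall t, 0 <= t <= tau ->
    closed_ball c r (vadd x1 (vscale t u)) /\ vdist x0 (vadd x1 (vscale t u)) < e.
Proof.
  intros Hr He Hx0. unfold closed_ball in *.
  set (s := Rmin 1 (e / (4 * r))).
  assert (Hs : 0 < s <= 1).
  { split; [apply Rmin_glb_lt; [lra | apply Rdiv_lt_0_compat; lra] | apply Rmin_l]. }
  assert (Hsr : s * r <= e / 4).
  { apply Rle_trans with (e / (4 * r) * r); [apply Rmult_le_compat_r; [lra | apply Rmin_r]|].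
    right. field. lra. }
  pose proof (vnorm_nonneg N u) as Hu.
  set (x1 := vadd x0 (vscale s (vsub c x0))).
  exists x1, (s * r / (vnorm u + 1)). split; [apply Rdiv_lt_0_compat; nra|].
  intros t Ht.
  assert (Htu : t * vnorm u <= s * r).
  { apply Rle_trans with (t * (vnorm u + 1)); [nra|].
    apply Rle_trans with (s * r / (vnorm u + 1) * (vnorm u + 1)); [nra|].
    right. field. lra. }
  assert (Hx1c : vdist x1 c = (1 - s) * vdist x0 c).
  { rewrite (vdist_scale _ (1 - s) x1 c (vsub x0 c)) by (unfold x1; vec_ext).
    rewrite Rabs_right by lra. reflexivity. }
  assert (Hx0x1 : vdist x0 x1 = s * vdist x0 c).
  { rewrite (vdist_scale _ s x0 x1 (vsub x0 c)) by (unfold x1; vec_ext).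
    rewrite Rabs_right by lra. reflexivity. }
  assert (Hx1x : vdist x1 (vadd x1 (vscale t u)) = t * vnorm u).
  { rewrite (vdist_scale _ (- t) _ _ u) by vec_ext.
    rewrite Rabs_Ropp, Rabs_right by lra. reflexivity. }
  assert (Hxx1 : vdist (vadd x1 (vscale t u)) x1 = t * vnorm u).
  { rewrite (vdist_scale _ t _ _ u) by vec_ext. rewrite Rabs_right by lra. reflexivity. }
  assert (s * vdist x0 c <= s * r) by (apply Rmult_le_compat_l; lra).
  assert ((1 - s) * vdist x0 c <= (1 - s) * r) by (apply Rmult_le_compat_l; lra).
  pose proof (vdist_triangle N (vadd x1 (vscale t u)) x1 c).
  pose proof (vdist_triangle N x0 x1 (vadd x1 (vscale t u))).
  split; lra.
Qed.

(** * Restrictions to lines *)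

Section Lines.

Variables (N : nat) (H : vec N -> vec N -> R).

Lemma line_convex x u y :
  (forall x1 x2 s, 0 <= s <= 1 ->
     H (vadd (vscale s x1) (vscale (1 - s) x2)) y <= s * H x1 y + (1 - s) * H x2 y) ->
  convex_fun (fun t => H (vadd x (vscale t u)) y).
Proof.
  intros Hconv a b s Hs.
  replace (vadd x (vscale (s * a + (1 - s) * b) u))
    with (vadd (vscale s (vadd x (vscale a u))) (vscale (1 - s) (vadd x (vscale b u))))
    by vec_ext.
  apply Hconv, Hs.
Qed.

Lemma line_lipschitz Lam x u y :
  (forall x1 x2, Rabs (H x1 y - H x2 y) <= Lam * vdist x1 x2) ->
  lipschitz_fun (fun t => H (vadd x (vscale t u)) y) (Lam * vnorm u).
Proof.
  intros Hlip a b. cbv beta.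
  rewrite Rmult_assoc, (Rmult_comm (vnorm u)),
    <- (vdist_scale _ (a - b) (vadd x (vscale a u)) (vadd x (vscale b u)) u) by vec_ext.
  apply Hlip.
Qed.

Lemma dir_deriv1_of_line x u y t v w L : (forall i, w i = v * u i) ->
  one_sided_deriv (fun s => H (vadd x (vscale s u)) y) t v L ->
  dir_deriv1 H (vadd x (vscale t u)) y w L.
Proof.
  intros Hw Hd eps Heps. destruct (Hd eps Heps) as [delta [Hdelta Hquot]].
  exists delta. split; [exact Hdelta|]. intros lam Hlam.
  replace (vadd (vadd x (vscale t u)) (vscale lam w)) with (vadd x (vscale (t + lam * v) u)).
  - exact (Hquot lam Hlam).
  - apply functional_extensionality; intro i; unfold vadd, vscale; rewrite Hw; ring.
Qed.

Lemma segment_common_differentiability_point Lam (ys : nat -> vec N) x u a b :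
  (forall y x1 x2 s, 0 <= s <= 1 ->
     H (vadd (vscale s x1) (vscale (1 - s) x2)) y <= s * H x1 y + (1 - s) * H x2 y) ->
  (forall x1 y1 x2 y2, Rabs (H x1 y1 - H x2 y2) <= Lam * vdist x1 x2 + Lam * vdist y1 y2) ->
  a < b ->
  exists t, a <= t <= b /\ forall k, exists L,
    dir_deriv1 H (vadd x (vscale t u)) (ys k) u L /\
    dir_deriv1 H (vadd x (vscale t u)) (ys k) (vopp u) (- L).
Proof.
  intros Hconv Hlip Hab.
  destruct (family_common_differentiability_point
      (fun k t => H (vadd x (vscale t u)) (ys k)) (Lam * vnorm u)) with a b
    as [t [Ht Hdiff]]; [| |exact Hab|].
  - intro k. apply line_convex, Hconv.
  - intro k. apply line_lipschitz. intros x1 x2.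
    pose proof (Hlip x1 (ys k) x2 (ys k)) as Hk. rewrite vdist_self, Rmult_0_r, Rplus_0_r in Hk.
    exact Hk.
  - exists t. split; [exact Ht|]. intro k. destruct (Hdiff k) as [L [Hplus Hminus]].
    exists L. split; eapply dir_deriv1_of_line; eauto; intro i; unfold vopp; ring.
Qed.

End Lines.

Theorem proposition3p2 (N : nat) (H : vec N -> vec N -> R) (Lam : R)
  (hskew : skew_symmetric H) (hcc : convex_concave H)
  (hLam : 0 < Lam)
  (hlip : forall x1 y1 x2 y2,
     Rabs (H x1 y1 - H x2 y2) <= Lam * vdist x1 x2 + Lam * vdist y1 y2)
  (c : vec N) (r : R) (hr : 0 < r)
  (B : vec N -> Prop) (hBc : compact_set B) (hBi : nonempty_interior B)
  (u : vec N) :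
  exists A' : vec N -> Prop,
    dense_in A' (closed_ball c r) /\
    forall x, A' x ->
      exists Bxu : vec N -> Prop,
        dense_in Bxu B /\
        forall y, Bxu y ->
          exists L, dir_deriv1 H x y u L /\ dir_deriv1 H x y (vopp u) (- L).
Proof.
  destruct hBi as [y0 [e0 [He0 Hball]]].
  destruct (compact_dense_sequence N B y0 hBc) as [ys Hys].
  { apply Hball. rewrite vdist_self. exact He0. }
  exists (fun x => closed_ball c r x /\ forall k, exists L,
            dir_deriv1 H x (ys k) u L /\ dir_deriv1 H x (ys k) (vopp u) (- L)).
  split.
  - split; [intros x [Hx _]; exact Hx|].
    intros x0 Hx0 e He.
    destruct (closed_ball_segment_near N c x0 u r e hr He Hx0) as [x1 [tau [Htau Hseg]]].
    destruct (segment_common_differentiability_point N H Lam ys x1 u 0 tau (proj1 hcc) hlip Htau)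
      as [t [Ht Hdiff]].
    destruct (Hseg t Ht) as [Hin Hnear].
    exists (vadd x1 (vscale t u)). auto.
  - intros x [_ Hx]. exists (fun y => exists k, y = ys k). split; [exact Hys|].
    intros y [k ->]. apply Hx.
Qed.
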